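(* Let $V$ be a finite-dimensional real vector space and let $X:\lambda\to\mathrm{End}(V)$ be a map such that for all $\alpha,\beta\in\lambda$: $X(\alpha)X(\beta)-X(\beta)X(\alpha)=0$ if $(\alpha|\beta)=0$, and $X(\alpha)X(\beta)+X(\beta)X(\alpha)=X(\alpha\pm\beta)$ if $(\alpha|\beta)=\mp1$ and $\alpha\pm\beta\in\lambda$. Then the assignment $X_i\mapsto X(\alpha_i)\otimes\Gamma(\alpha_i)\in\mathrm{End}(V\otimes S)$ extends to a finite-dimensional representation $\sigma$ of $\mathfrak k$ on $V\otimes S$.
   Context: Let $A=(a_{ij})_{1\le i,j\le n}$ be a symmetrizable simply laced generalized Cartan matrix (off-diagonal entries $0$ or $-1$); the Dynkin diagram has an edge between $i\ne j$ iff $a_{ij}=-1$. Let $\mathfrak g$ be the split real Kac–Moody algebra of $A$ with Chevalley generators $e_i,f_i$, Cartan subalgebra $\mathfrak h$ (from a real realization), simple roots $\alpha_1,\dots,\alpha_n\in\mathfrak h^*$, and let $(\cdot|\cdot)$ be the nondegenerate invariant symmetric bilinear form induced on $\mathfrak h^*$, with $(\alpha_i|\alpha_j)=a_{ij}$. Let $\mathfrak k$ be the fixed-point subalgebra of the Chevalley involution ($e_i\mapsto -f_i$, $f_i\mapsto-e_i$, $h\mapsto -h$), with Berman generators $X_i=e_i-f_i$; $\mathfrak k$ is presented by generators $X_1,\dots,X_n$ and relations $[X_i,[X_i,X_j]]=-X_j$ if $a_{ij}=-1$, $[X_i,X_j]=0$ if $a_{ij}=0$. Let $\lambda$ be the set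 of real roots consisting of the simple roots $\alpha_1,\dots,\alpha_n$ together with all $\alpha_i+\alpha_j$ for $i,j$ forming an edge of the Dynkin diagram. A generalized spin representation is a representation $\rho$ of $\mathfrak k$ with $\rho(X_i)^2=-\frac14\mathrm{id}$ for all $i$. Fix a finite-dimensional real vector space $S$ with positive definite inner product and orthonormal basis $f_1,\dots,f_l$, and a generalized spin representation $\rho:\mathfrak k\to\mathrm{End}(S)$ whose values $\rho(X_i)$ are anti-symmetric real matrices with respect to this basis (such exist, e.g. by realifying the generalized spin representations with compact image constructed by Hainke–Köhl–Levy); put $\Gamma(\alpha_i):=2\rho(X_i)$. *)

From HB Require Import structures.
From mathcomp Require Import all_boot all_order all_algebra.
From mathcomp Require Import mxtens.
From mathcomp Require Import reals.

Set Implicit Arguments.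
Unset Strict Implicit.
Unset Printing Implicit Defensive.

Import Order.TTheory GRing.Theory Num.Theory.
Local Open Scope ring_scope.

(* A simply laced generalized Cartan matrix: a_ii = 2, off-diagonal entries
   are 0 or -1, and a_ij = 0 <-> a_ji = 0 (GCM axiom).  (Such a matrix is
   automatically symmetric, hence symmetrizable.) *)
Definition simply_laced_GCM (n : nat) (A : 'M[int]_n) : Prop :=
  (forall i, A i i = 2%:Z) /\
  (forall i j, i != j -> A i j = 0 \/ A i j = -1) /\
  (forall i j, A i j = 0 <-> A j i = 0).

(* Elements of the root lattice  sum_i c_i alpha_i  are encoded by their
   coefficient row vectors c (the simple roots are linearly independent). *)
Definition simple_root (n : nat) (i : 'I_n) : 'rV[int]_n := delta_mx 0 i.

(* The invariant form on the root lattice: (alpha_i | alpha_j) = a_ij. *)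
Definition rform (n : nat) (A : 'M[int]_n) (a b : 'rV[int]_n) : int :=
  (a *m A *m b^T) 0 0.

Definition in_lambda (n : nat) (A : 'M[int]_n) (a : 'rV[int]_n) : Prop :=
  (exists i, a = simple_root i) \/
  (exists i j, i != j /\ A i j = -1 /\ a = simple_root i + simple_root j).

Definition comm (R : pzRingType) (d : nat) (P Q : 'M[R]_d) : 'M[R]_d :=
  P *m Q - Q *m P.

(* The defining relations (Berman presentation) of k for a family
   Y_i = image of the generator X_i in End(R^d):
     [Y_i,[Y_i,Y_j]] = -Y_j  if a_ij = -1,   [Y_i,Y_j] = 0  if a_ij = 0
   (for i <> j).  Since k is presented by generators X_i and exactly these
   relations, a family Y satisfies them iff the assignment X_i |-> Y_i
   extends (uniquely) to a Lie algebra representation of k on R^d. *)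
Definition k_relations (R : pzRingType) (n : nat) (A : 'M[int]_n) (d : nat)
    (Y : 'I_n -> 'M[R]_d) : Prop :=
  forall i j, i != j ->
    (A i j = -1 -> comm (Y i) (comm (Y i) (Y j)) = - Y j) /\
    (A i j = 0 -> comm (Y i) (Y j) = 0).

Definition extends_to_k_rep (R : pzRingType) (n : nat) (A : 'M[int]_n) (d : nat)
    (Y : 'I_n -> 'M[R]_d) : Prop := k_relations A Y.

Definition gen_spin_rep_antisym (R : realType) (n : nat) (A : 'M[int]_n) (l : nat)
    (rho : 'I_n -> 'M[R]_l) : Prop :=
  extends_to_k_rep A rho /\
  (forall i, rho i *m rho i = - (4%:R^-1) *: 1%:M) /\
  (forall i, (rho i)^T = - rho i).

From HB Require Import structures.
From mathcomp Require Import all_boot all_order all_algebra.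
From mathcomp Require Import mxtens.
From mathcomp Require Import reals.

(* Put Gamma_i = 2 rho_i and sigma_i = X(alpha_i) (x) Gamma_i.  The spin
   relations give Gamma_i^2 = -1, and Gamma_i, Gamma_j anticommute when
   a_ij = -1 and commute when a_ij = 0.  Hence [sigma_i, sigma_j] is the
   anticommutator, resp. the commutator, of X(alpha_i) and X(alpha_j)
   tensored with Gamma_i Gamma_j.  On an edge the hypotheses on X turn it
   into X(alpha_i + alpha_j) (x) Gamma_i Gamma_j, and bracketing once more
   with sigma_i, using (alpha_i + alpha_j | alpha_i) = 1, yields
   X(alpha_j) (x) Gamma_i^2 Gamma_j = -sigma_j; off edges it vanishes. *)

Set Implicit Arguments.
Unset Strict Implicit.
Unset Printing Implicit Defensive.

Import GRing.Theory Num.Theory.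
Local Open Scope ring_scope.

Lemma simply_laced_GCM_sym n (A : 'M[int]_n) :
  simply_laced_GCM A -> forall i j, A j i = A i j.
Proof.
case=> [_ [off_diag zero_sym]] i j.
have [-> // | ij] := eqVneq i j.
have ji : j != i by rewrite eq_sym.
case: (off_diag i j ij) => Aij; rewrite Aij.
  by apply/zero_sym.
by case: (off_diag j i ji) => // /zero_sym; rewrite Aij.
Qed.

Lemma rform_simple_root n (A : 'M[int]_n) i j :
  rform A (simple_root i) (simple_root j) = A i j.
Proof. by rewrite /rform /simple_root trmx_delta -rowE -colE !mxE. Qed.

Lemma rformDl n (A : 'M[int]_n) a b c :
  rform A (a + b) c = rform A a c + rform A b c.
Proof. by rewrite /rform !mulmxDl mxE. Qed.

Section TensorBilinear.
Variable R : pzRingType.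
Variables m n p q : nat.
Implicit Types (x y : 'M[R]_(m, n)) (z : 'M[R]_(p, q)).

Lemma tensmxDl x y z : (x + y) *t z = x *t z + y *t z.
Proof. by apply/matrixP=> i j; rewrite !mxE mulrDl. Qed.

Lemma tensmxNl x z : (- x) *t z = - (x *t z).
Proof. by apply/matrixP=> i j; rewrite !mxE mulNr. Qed.

Lemma tensmxNr x z : x *t (- z) = - (x *t z).
Proof. by apply/matrixP=> i j; rewrite !mxE mulrN. Qed.

End TensorBilinear.

Section TensorCommutator.
Variables (R : comPzRingType) (m l : nat).
Implicit Types (x y z : 'M[R]_m) (g h : 'M[R]_l).

Lemma comm_tens_anticomm x y g h : h *m g = - (g *m h) ->
  comm (x *t g) (y *t h) = (x *m y + y *m x) *t (g *m h).
Proof. by move=> hg; rewrite /comm !tensmx_mul hg tensmxNr opprK tensmxDl. Qed.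

Lemma comm_tens_comm x y g h : h *m g = g *m h ->
  comm (x *t g) (y *t h) = comm x y *t (g *m h).
Proof. by move=> hg; rewrite /comm !tensmx_mul hg tensmxDl tensmxNl. Qed.

Lemma tens_double_comm x y z g h :
  g *m g = - 1%:M -> h *m g = - (g *m h) ->
  x *m y + y *m x = z -> x *m z + z *m x = y ->
  comm (x *t g) (comm (x *t g) (y *t h)) = - (y *t h).
Proof.
move=> gg hg xy xz.
have ggh_g : g *m h *m g = - (g *m (g *m h)) by rewrite -mulmxA hg mulmxN.
rewrite comm_tens_anticomm // xy comm_tens_anticomm // xz.
by rewrite mulmxA gg mulNmx mul1mx tensmxNr.
Qed.

Lemma tens_comm_eq0 x y g h : h *m g = g *m h -> comm x y = 0 ->
  comm (x *t g) (y *t h) = 0.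
Proof. by move=> hg xy; rewrite comm_tens_comm // xy tens0mx. Qed.

End TensorCommutator.

Section SpinGenerators.
Variables (R : numFieldType) (l : nat) (r s : 'M[R]_l).
Hypothesis r_sqr : r *m r = - 4%:R^-1 *: 1%:M.

Lemma spin_double_sqr : (2%:R *: r) *m (2%:R *: r) = - 1%:M.
Proof.
rewrite -scalemxAl -scalemxAr r_sqr !scalerA mulrN -natrM mulfV ?pnatr_eq0 //.
by rewrite scaleN1r.
Qed.

(* With c = -1/4, [r, [r, s]] = 2c s - 2 r s r, so the hypothesis forces
   r s r = -c s; multiplying on the left by r gives c (s r) = -c (r s). *)
Lemma spin_anticomm : comm r (comm r s) = - s -> s *m r = - (r *m s).
Proof.
set c : R := - 4%:R^-1.
have two_neq0 : 2%:R != 0 :> R by rewrite pnatr_eq0.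
have c_neq0 : c != 0 by rewrite oppr_eq0 invr_eq0 pnatr_eq0.
have s4 : c *: s *+ 4 = - s.
  by rewrite scalerMnl -[c *+ 4]mulr_natr /c mulNr mulVf ?pnatr_eq0 ?scaleN1r.
have rrs : r *m (r *m s) = c *: s by rewrite mulmxA r_sqr -scalemxAl mul1mx.
have srr : s *m r *m r = c *: s by rewrite -mulmxA r_sqr -scalemxAr mulmx1.
rewrite /comm mulmxBr mulmxBl rrs srr mulmxA => adr2.
have rsr : r *m s *m r = - (c *: s).
  move: adr2; rewrite opprB -mulr2n -s4 -[4%N]/(2 * 2)%N mulrnA -!scaler_nat.
  move=> /(scalemx_inj two_neq0) /eqP.
  rewrite subr_eq addrC -subr_eq => /eqP <-.
  by rewrite scaler_nat mulr2n opprD addrA subrr sub0r.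
have := congr1 (mulmx r) rsr.
rewrite !mulmxA r_sqr -!scalemxAl mul1mx mulmxN -scalemxAr -scalerN.
exact: scalemx_inj.
Qed.

End SpinGenerators.

Theorem proposition4p1 (R : realType) (n : nat) (A : 'M[int]_n)
    (l : nat) (rho : 'I_n -> 'M[R]_l) (m : nat) (X : 'rV[int]_n -> 'M[R]_m) :
  simply_laced_GCM A ->
  gen_spin_rep_antisym A rho ->
  (forall a b, in_lambda A a -> in_lambda A b ->
     (rform A a b = 0 -> X a *m X b - X b *m X a = 0) /\
     (rform A a b = -1 -> in_lambda A (a + b) ->
        X a *m X b + X b *m X a = X (a + b)) /\
     (rform A a b = 1 -> in_lambda A (a - b) ->
        X a *m X b + X b *m X a = X (a - b))) ->
  extends_to_k_rep A
    (fun i : 'I_n => X (simple_root i) *t (2%:R *: rho i) : 'M[R]_(m * l)).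
Proof.
move=> /[dup] GCM [A_diag _] [rho_rel [rho_sqr _]] X_rel i j ij.
have lam k : in_lambda A (simple_root k) by left; exists k.
have scale2_mul (g h : 'M[R]_l) :
    (2%:R *: g) *m (2%:R *: h) = (2%:R * 2%:R) *: (g *m h).
  by rewrite -scalemxAl -scalemxAr scalerA.
split=> Aij.
- have Aji : A j i = -1 by rewrite (simply_laced_GCM_sym GCM).
  have lam_ij : in_lambda A (simple_root i + simple_root j).
    by right; exists i, j.
  apply: tens_double_comm.
  + exact: spin_double_sqr.
  + have rho_ji := spin_anticomm (rho_sqr i) ((rho_rel i j ij).1 Aij).
    by rewrite !scale2_mul rho_ji scalerN.
  + by apply: (X_rel _ _ (lam i) (lam j)).2.1 => //; rewrite rform_simple_root.
  + set a_i := simple_root i; set a_j := simple_root j.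
    have rform_ij_i : rform A (a_i + a_j) a_i = 1.
      by rewrite rformDl !rform_simple_root Aji A_diag.
    have sub_ij_i : a_i + a_j - a_i = a_j by rewrite addrC addKr.
    have := (X_rel _ _ lam_ij (lam i)).2.2 rform_ij_i.
    by rewrite sub_ij_i addrC => /(_ (lam j)).
- apply: tens_comm_eq0.
  + have rho_ij : rho j *m rho i = rho i *m rho j.
      by apply/esym/subr0_eq; apply: (rho_rel i j ij).2.
    by rewrite !scale2_mul rho_ij.
  + by apply: (X_rel _ _ (lam i) (lam j)).1; rewrite rform_simple_root.
Qed.
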